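(* Let $n\ge 4$ and let $x$ be any vertex of the path $P_n$. Then there exists a $(P_n,x)$-well path 2-placement.
   Context: $P_n$ is the path on $n$ vertices; $dist$ is distance in $P_n$, $d(y)$ the degree of $y$ in $P_n$, $N(x)$ the set of neighbors of $x$. A permutation $\sigma$ of $V(P_n)$ is a 2-placement of $P_n$ if for every edge $ab$ of $P_n$, $\sigma(a)\sigma(b)$ is not an edge of $P_n$. $P_n^k$ is the $k$-th power of $P_n$; $\sigma(P_n)\subseteq P_n^k$ means $dist(\sigma(a),\sigma(b))\le k$ for every edge $ab$ of $P_n$. A fixed-point-free permutation $\sigma$ of $V(P_n)$ is a $(P_n,x)$-well path 2-placement if: (1) $\sigma$ is a 2-placement of $P_n$; (2) $\sigma(P_n)\subseteq P_n^6$; (3) $dist(x,\sigma(x))\le 2$; (4) $dist(y,\sigma(y))\le 3$ for every $y\in N(x)$ and for every $y$ with $d(y)=1$; (5) every cycle of $\sigma$ (in its disjoint cycle decomposition) has length at most $5$. *)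

From mathcomp Require Import all_boot all_fingroup.
Set Implicit Arguments. Unset Strict Implicit. Unset Printing Implicit Defensive.

(* Vertices of the path P_n are 0,...,n-1 ('I_n); edges join i and i+1. *)

Definition pdist (n : nat) (i j : 'I_n) : nat := (i - j) + (j - i).

Definition padj (n : nat) (i j : 'I_n) : bool := pdist i j == 1.

Definition pnbhd (n : nat) (x : 'I_n) : {set 'I_n} := [set y | padj x y].
Definition pdeg (n : nat) (y : 'I_n) : nat := #|pnbhd y|.

Definition two_placement (n : nat) (s : {perm 'I_n}) : Prop :=
  forall a b : 'I_n, padj a b -> ~~ padj (s a) (s b).

Definition in_power (n k : nat) (s : {perm 'I_n}) : Prop :=
  forall a b : 'I_n, padj a b -> pdist (s a) (s b) <= k.

Definition fixed_point_free (n : nat) (s : {perm 'I_n}) : Prop :=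
  forall y : 'I_n, s y != y.

Definition well_path_2_placement (n : nat) (x : 'I_n) (s : {perm 'I_n}) : Prop :=
  fixed_point_free s /\
  two_placement s /\
  in_power 6 s /\
  pdist x (s x) <= 2 /\
  (forall y : 'I_n, (y \in pnbhd x) || (pdeg y == 1) -> pdist y (s y) <= 3) /\
  (forall y : 'I_n, #|porbit s y| <= 5).

From mathcomp Require Import all_boot all_fingroup zify.

Set Implicit Arguments.
Unset Strict Implicit.
Unset Printing Implicit Defensive.

(* Vertices of P_n are 0..n-1, so a placement is encoded by a
   function f : nat -> nat on [0, n), a "path placement" (injective, fixed-point
   free, adjacent vertices go to vertices at distance in [2, 6], cycles of
   length at most 5).  Call it local when every vertex moves by at most 2.
   - Local placements of two paths can be concatenated: the junction edge is
     mapped to vertices at distance 3..5.  Starting from the empty path and the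
     local blocks 0->1->3->2->0 (n = 4) and 0->1->3->4->2->0 (n = 5), every
     n = 4a + 5b carries a local placement; these are all n >= 4 except 6, 7
     and 11, for which explicit (x-dependent) tables are checked by computation.
   - A local placement satisfies every requirement of a (P_n,x)-well placement
     for any x, since the endpoints are exactly the vertices of degree one.
   - Finally the function is turned into a permutation of 'I_n, and a cycle
     bound iter m f y = y bounds the size of the orbit of y. *)

Definition natdist (a b : nat) : nat := (a - b) + (b - a).

Record path_placement (n : nat) (f : nat -> nat) : Prop := PathPlacement {
  pp_range : forall i, i < n -> f i < n;
  pp_inj : forall i j, i < n -> j < n -> f i = f j -> i = j;
  pp_fpf : forall i, i < n -> f i != i;
  pp_nonadj : forall i, i.+1 < n -> natdist (f i) (f i.+1) != 1;
  pp_power : forall i, i.+1 < n -> natdist (f i) (f i.+1) <= 6;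
  pp_cycle : forall y, y < n -> exists2 m, 0 < m <= 5 & iter m f y = y }.

Definition local_placement (n : nat) (f : nat -> nat) : Prop :=
  path_placement n f /\ forall i, i < n -> natdist i (f i) <= 2.

Definition well_placement (n x : nat) (f : nat -> nat) : Prop :=
  [/\ path_placement n f, natdist x (f x) <= 2 &
      forall y, y < n -> (natdist x y == 1) || (y == 0) || (y == n.-1) ->
        natdist y (f y) <= 3].

Definition placementb (n : nat) (f : nat -> nat) : bool :=
  [&& all (fun i => (f i < n) && (f i != i)) (iota 0 n),
      all (fun i => all (fun j => (f i == f j) ==> (i == j)) (iota 0 n)) (iota 0 n),
      all (fun i => (natdist (f i) (f i.+1) != 1) && (natdist (f i) (f i.+1) <= 6))
          (iota 0 n.-1) &
      all (fun i => has (fun m => iter m f i == i) (iota 1 5)) (iota 0 n)].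

Definition localb (n : nat) (f : nat -> nat) : bool :=
  placementb n f && all (fun i => natdist i (f i) <= 2) (iota 0 n).

Definition wellb (n x : nat) (f : nat -> nat) : bool :=
  [&& placementb n f, natdist x (f x) <= 2 &
      all (fun y => ((natdist x y == 1) || (y == 0) || (y == n.-1)) ==>
                    (natdist y (f y) <= 3)) (iota 0 n)].

Lemma mem_iota0 n i : (i \in iota 0 n) = (i < n).
Proof. by rewrite mem_iota add0n. Qed.

Lemma placementbP n f : placementb n f -> path_placement n f.
Proof.
case/and4P=> /allP Hfun /allP Hinj /allP Hedge /allP Hcyc; split.
- by move=> i; rewrite -mem_iota0 => /Hfun /andP[].
- move=> i j Hi Hj Eij; move: (Hinj i); rewrite mem_iota0 => /(_ Hi) /allP /(_ j).
  by rewrite mem_iota0 Eij eqxx => /(_ Hj) /eqP.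
- by move=> i; rewrite -mem_iota0 => /Hfun /andP[].
- by move=> i Hi; case/andP: (Hedge i ltac:(rewrite mem_iota0; lia)).
- by move=> i Hi; case/andP: (Hedge i ltac:(rewrite mem_iota0; lia)).
- move=> y; rewrite -mem_iota0 => /Hcyc /hasP[m]; rewrite mem_iota => Hm /eqP Em.
  by exists m => //; lia.
Qed.

Lemma localbP n f : localb n f -> local_placement n f.
Proof.
case/andP=> /placementbP Hf /allP Hloc; split=> // i Hi.
by apply: Hloc; rewrite mem_iota0.
Qed.

Lemma wellbP n x f : wellb n x f -> well_placement n x f.
Proof.
case/and3P=> /placementbP Hf Hx /allP Hnb; split=> // y Hy Hyx.
by move: (Hnb y); rewrite mem_iota0 Hyx => /(_ Hy).
Qed.

Definition catf (k : nat) (t g : nat -> nat) (i : nat) : nat :=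
  if i < k then t i else k + g (i - k).

Lemma catf_lt k t g i : i < k -> catf k t g i = t i.
Proof. by rewrite /catf => ->. Qed.

Lemma catf_ge k t g i : k <= i -> catf k t g i = k + g (i - k).
Proof. by move=> Hi; rewrite /catf ifN // -leqNgt. Qed.

Lemma iter_catf_l k t g m i : (forall j, j < k -> t j < k) -> i < k ->
  iter m (catf k t g) i = iter m t i.
Proof.
move=> Ht Hi; elim: m => //= m ->.
have Hlt : iter m t i < k by elim: m => //= m IHm; apply: Ht.
by rewrite catf_lt.
Qed.

Lemma iter_catf_r k t g m j : iter m (catf k t g) (k + j) = k + iter m g j.
Proof.
by elim: m => //= m ->; rewrite catf_ge ?leq_addr // addKn.
Qed.

Lemma natdistDl k a b : natdist (k + a) (k + b) = natdist a b.
Proof. by rewrite /natdist !subnDl. Qed.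

(* In a local placement the last vertex moves back by 1 or 2 and the first
   vertex moves forward by 1 or 2 (they cannot stay nor leave the path). *)
Lemma local_last k t : local_placement k t -> 0 < k -> t k.-1 < k.-1 <= t k.-1 + 2.
Proof.
move=> [[tr _ tf _ _ _] tl] k0; have Hk : k.-1 < k by lia.
by move: (tr _ Hk) (tf _ Hk) (tl _ Hk); rewrite /natdist => ? /eqP ? ?; lia.
Qed.

Lemma local_first m g : local_placement m g -> 0 < m -> 0 < g 0 <= 2.
Proof.
move=> [[_ _ gf _ _ _] gl] m0.
by move: (gf 0 m0) (gl 0 m0); rewrite /natdist => /eqP ? ?; lia.
Qed.

(* The image distances of the edges of the concatenation are those of the two
   pieces, plus the junction edge (k-1, k), whose endpoints land at distance
   3..5 from each other. *)
Lemma catf_edge k m t g (P : nat -> Prop) :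
  local_placement k t -> local_placement m g ->
  (forall i, i.+1 < k -> P (natdist (t i) (t i.+1))) ->
  (forall i, i.+1 < m -> P (natdist (g i) (g i.+1))) ->
  (forall d, 3 <= d <= 5 -> P d) ->
  forall i, i.+1 < k + m -> P (natdist (catf k t g i) (catf k t g i.+1)).
Proof.
move=> Ht Hg Pt Pg Pjunction i Hi.
case: (ltnP i.+1 k) => Hk; first by rewrite !catf_lt //; [apply: Pt | lia].
case: (ltnP i k) => Hik.
- have Ei : i = k.-1 by lia.
  rewrite catf_lt // catf_ge // (_ : i.+1 - k = 0); last by lia.
  apply: Pjunction; move: (local_last Ht ltac:(lia)) (local_first Hg ltac:(lia)).
  by rewrite /natdist -Ei; lia.
- rewrite !catf_ge // natdistDl subSn //; apply: Pg; lia.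
Qed.

Lemma local_placement_cat k m t g :
  local_placement k t -> local_placement m g -> local_placement (k + m) (catf k t g).
Proof.
move=> Ht Hg; case: (Ht) (Hg) => [[tr ti tf tn tp tc] tl] [[gr gi gf gn gp gc] gl].
split; first split.
- move=> i Hi; case: (ltnP i k) => Hk; first by rewrite catf_lt //; have := tr i Hk; lia.
  by rewrite catf_ge //; have := gr (i - k); lia.
- move=> i j Hi Hj; case: (ltnP i k) => Hik; case: (ltnP j k) => Hjk.
  + by rewrite !catf_lt //; apply: ti.
  + by rewrite catf_lt // catf_ge //; have := tr i Hik; lia.
  + by rewrite catf_ge // catf_lt //; have := tr j Hjk; lia.
  + by rewrite !catf_ge // => Eij; have := gi (i - k) (j - k); lia.
- move=> i Hi; case: (ltnP i k) => Hk; first by rewrite catf_lt // tf.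
  by rewrite catf_ge //; move: (gf (i - k)) => /(_ ltac:(lia)) /eqP; lia.
- apply: (@catf_edge _ _ _ _ (fun d => d != 1) Ht Hg tn gn).
  by move=> d /andP[d3 _]; apply/eqP; lia.
- by apply: (@catf_edge _ _ _ _ (fun d => d <= 6) Ht Hg tp gp) => d /andP[_ /leqW].
- move=> y Hy; case: (ltnP y k) => Hk.
    by have [p Hp Ep] := tc y Hk; exists p; rewrite // iter_catf_l.
  have [p Hp Ep] := gc (y - k) ltac:(lia); exists p => //.
  by rewrite -(subnKC Hk) iter_catf_r Ep.
- move=> i Hi; case: (ltnP i k) => Hk; first by rewrite catf_lt // tl.
  by rewrite catf_ge //; move: (gl (i - k)); rewrite /natdist => /(_ ltac:(lia)); lia.
Qed.

Definition block4 : nat -> nat := nth 0 [:: 1; 3; 0; 2].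
Definition block5 : nat -> nat := nth 0 [:: 1; 3; 0; 4; 2].

Lemma local_block4 : local_placement 4 block4.
Proof. exact: localbP. Qed.

Lemma local_block5 : local_placement 5 block5.
Proof. exact: localbP. Qed.

Lemma local_placement_45 a b : exists f, local_placement (4 * a + 5 * b) f.
Proof.
elim: a => [|a [f Hf]].
- elim: b => [|b [f Hf]]; first by exists id; split.
  exists (catf 5 block5 f); rewrite muln0 add0n mulnS in Hf *.
  exact: local_placement_cat local_block5 Hf.
- exists (catf 4 block4 f); rewrite mulnS -addnA.
  exact: local_placement_cat local_block4 Hf.
Qed.

Lemma sum_of_4_and_5 n : 4 <= n -> n \notin [:: 6; 7; 11] ->
  exists a b, n = 4 * a + 5 * b.
Proof.
rewrite !inE !negb_or => n4 /and3P[/eqP n6 /eqP n7 /eqP n11].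
by exists ((n - 5 * (n %% 4)) %/ 4), (n %% 4); lia.
Qed.

Lemma local_is_well n x f : x < n -> local_placement n f -> well_placement n x f.
Proof.
by move=> Hx [Hf Hloc]; split=> // [|y Hy _]; [exact: Hloc | have := Hloc y Hy; lia].
Qed.

Definition table6 (x : nat) : nat -> nat :=
  nth 0 (if (x == 2) || (x == 3) then [:: 2; 4; 0; 5; 1; 3] else [:: 1; 3; 5; 0; 2; 4]).
Definition table7 (x : nat) : nat -> nat :=
  nth 0 (if x == 2 then [:: 1; 4; 0; 5; 2; 6; 3]
         else if x == 3 then [:: 1; 3; 5; 2; 6; 0; 4] else [:: 1; 3; 5; 0; 2; 6; 4]).
Definition table11 (x : nat) : nat -> nat :=
  nth 0 (if x == 6 then [:: 1; 3; 0; 2; 5; 8; 4; 9; 6; 10; 7]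
         else if x == 7 then [:: 1; 3; 0; 2; 5; 7; 9; 6; 10; 4; 8]
         else [:: 1; 3; 0; 2; 5; 7; 9; 4; 6; 10; 8]).

Lemma well_table n (t : nat -> nat -> nat) x :
  all (fun x => wellb n x (t x)) (iota 0 n) -> x < n -> well_placement n x (t x).
Proof. by move=> /allP Ht Hx; apply/wellbP/Ht; rewrite mem_iota0. Qed.

Lemma well_table6 x : x < 6 -> well_placement 6 x (table6 x).
Proof. exact: well_table. Qed.

Lemma well_table7 x : x < 7 -> well_placement 7 x (table7 x).
Proof. exact: well_table. Qed.

Lemma well_table11 x : x < 11 -> well_placement 11 x (table11 x).
Proof. by apply: well_table; vm_compute. Qed.

Lemma well_placement_exists n x : 4 <= n -> x < n -> exists f, well_placement n x f.
Proof.
move=> n4 Hx; have [Hn | ] := boolP (n \notin [:: 6; 7; 11]).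
  have [a [b En]] := @sum_of_4_and_5 n n4 Hn; have [f Hf] := local_placement_45 a b.
  by exists f; rewrite En in Hx *; apply: local_is_well.
rewrite negbK !inE => /or3P[] /eqP En; subst n.
- by exists (table6 x); apply: well_table6.
- by exists (table7 x); apply: well_table7.
- by exists (table11 x); apply: well_table11.
Qed.

(* In P_n, a vertex of degree one is an endpoint: an inner vertex y has the
   two neighbours y-1 and y+1. *)
Lemma deg1_endpoint n (y : 'I_n) : pdeg y == 1 -> (y == 0 :> nat) || (y == n.-1 :> nat).
Proof.
apply: contraTT; rewrite negb_or => /andP[/eqP y0 /eqP yn].
have [Hpred Hsucc] : y.-1 < n /\ y.+1 < n by have := ltn_ord y; lia.
have Hnb : [set Ordinal Hpred; Ordinal Hsucc] \subset pnbhd y.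
  by apply/subsetP => z; rewrite !inE => /orP[] /eqP ->;
     rewrite /padj /pdist /=; apply/eqP; lia.
have Hne : Ordinal Hpred != Ordinal Hsucc by apply/eqP => /(congr1 val) /=; lia.
move: (subset_leq_card Hnb); rewrite cards2 Hne /pdeg.
by case: #|pnbhd y| => [|[]].
Qed.

Lemma card_porbit_le (T : finType) (s : {perm T}) y m :
  0 < m -> iter m s y = y -> #|porbit s y| <= m.
Proof.
move=> m0 Em.
have Emq q : iter (m * q) s y = y by elim: q => [|q IHq]; rewrite ?muln0 // mulnS iterD IHq.
have Hsub : porbit s y \subset [set iter i s y | i : 'I_m].
  apply/subsetP => z /porbitP[i ->]; rewrite permX.
  apply/imsetP; exists (Ordinal (ltn_pmod i m0)) => //=.
  by rewrite {1}(divn_eq i m) addnC iterD mulnC Emq.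
by rewrite (leq_trans (subset_leq_card Hsub)) // (leq_trans (leq_imset_card _ _)) ?card_ord.
Qed.

Lemma perm_of_nat n (f : nat -> nat) :
  (forall i, i < n -> f i < n) -> (forall i j, i < n -> j < n -> f i = f j -> i = j) ->
  exists s : {perm 'I_n}, forall i, s i = f i :> nat.
Proof.
move=> Hr Hi; pose h (i : 'I_n) : 'I_n := Ordinal (Hr i (ltn_ord i)).
have h_inj : injective h.
  by move=> i j /(congr1 val) /= /(Hi _ _ (ltn_ord i) (ltn_ord j)) /val_inj.
by exists (perm h_inj) => i; rewrite permE.
Qed.

Lemma padj_succ n (a b : 'I_n) : padj a b -> b = a.+1 :> nat \/ a = b.+1 :> nat.
Proof. by rewrite /padj /pdist => /eqP; lia. Qed.

Lemma well_placement_perm n (x : 'I_n) f : well_placement n x f ->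
  exists s : {perm 'I_n}, well_path_2_placement x s.
Proof.
case=> Hf Hx Hnb; have [s sE] := perm_of_nat (pp_range Hf) (pp_inj Hf).
have natdistC a b : natdist a b = natdist b a by rewrite /natdist addnC.
have edge (a b : 'I_n) : padj a b ->
    (natdist (f a) (f b) != 1) && (natdist (f a) (f b) <= 6).
  have succ_edge i : i.+1 < n ->
      (natdist (f i) (f i.+1) != 1) && (natdist (f i) (f i.+1) <= 6).
    by move=> Hi; rewrite (pp_nonadj Hf Hi) (pp_power Hf Hi).
  case/padj_succ => E; [|rewrite natdistC]; rewrite E; apply: succ_edge.
  - by rewrite -E; exact: ltn_ord.
  - by rewrite -E; exact: ltn_ord.
exists s; split; [|split; [|split; [|split; [|split]]]].
- by move=> y; apply/eqP => /(congr1 (@nat_of_ord n)); rewrite sE; apply/eqP/(pp_fpf Hf).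
- by move=> a b /edge /andP[]; rewrite /padj /pdist !sE.
- by move=> a b /edge /andP[]; rewrite /pdist !sE.
- by rewrite /pdist sE.
- move=> y Hy; rewrite /pdist sE; apply: Hnb => //.
  case/orP: Hy => [|/deg1_endpoint /orP[] ->]; rewrite ?orbT //.
  by rewrite inE /padj /pdist => ->.
- move=> y; have [m /andP[m0 m5] Em] := pp_cycle Hf (ltn_ord y).
  have iterE k : iter k s y = iter k f y :> nat by elim: k => //= k IHk; rewrite sE IHk.
  by rewrite (leq_trans (card_porbit_le m0 _)) //; apply: val_inj; rewrite /= iterE.
Qed.

Theorem theorem3p1 (n : nat) (x : 'I_n) :
  4 <= n -> exists s : {perm 'I_n}, well_path_2_placement x s.
Proof.
move=> n4; have [f Hf] := well_placement_exists n4 (ltn_ord x).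
exact: well_placement_perm Hf.
Qed.
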